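(* Let $m\geqslant3$, $\alpha=2\uparrow\uparrow(m-1)$, and let $n$ be a natural number with $n<3^\alpha$. Then $H(n)=m$ if and only if $n=2^\alpha a$ with $a$ odd and $a<1.5^\alpha$. Moreover, if $n$ is not of the form $2^\alpha a$ with $a$ odd, then $H(n)\leqslant m-1$.
   Context: $H(n)$ is the height of the factorization tree of $n\geqslant1$: $H(1)=0$ and, for $n=p_1^{\alpha_1}\cdots p_k^{\alpha_k}>1$ with distinct primes $p_i$, $H(n)=1+\max_i H(\alpha_i)$. Tetration: $a\uparrow\uparrow0=1$, $a\uparrow\uparrow b=a^{a\uparrow\uparrow(b-1)}$. *)

From mathcomp Require Import all_boot.
Set Implicit Arguments. Unset Strict Implicit. Unset Printing Implicit Defensive.

(* Height of the factorization tree, computed with fuel.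
   prime_decomp n = [:: (p_1, a_1); ...; (p_k, a_k)] for n > 1, [::] for n <= 1.
   H(1) = 0 and H(n) = 1 + max_i H(a_i); since a_i < n, fuel n suffices. *)
Fixpoint Hfuel (fuel n : nat) : nat :=
  match fuel with
  | 0 => 0
  | f.+1 =>
      if n <= 1 then 0
      else (foldr maxn 0 [seq Hfuel f pe.2 | pe <- prime_decomp n]).+1
  end.

Definition H (n : nat) : nat := Hfuel n n.

Fixpoint tetr (a b : nat) : nat :=
  match b with
  | 0 => 1
  | b'.+1 => a ^ tetr a b'
  end.

From mathcomp Require Import all_boot.
From mathcomp Require Import zify.

(* Passing from n to one of its prime exponents is a step down the factorization
   tree, so a number of height at least j is at least 2↑↑j, while 2↑↑j itself has
   height j.  Let α = 2↑↑(k+1) and n < 3^α.  For an odd prime p, p^v_p(n) <= n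
   forces v_p(n) < α, so H(v_p(n)) <= k; hence if H(n) > k+1 the maximum defining
   H(n) is attained at p = 2 and H(n) = 1 + H(v₂(n)).  As 2^v₂(n) <= n < 4^α, we
   have v₂(n) < 2α, and the only number below 2α of height greater than k is α
   itself (by the same argument it is a multiple of 2^(2↑↑k) = α).  So H(n) <= k+2,
   with equality exactly when v₂(n) = α. *)

Lemma Hfuel_eq f1 f2 n : n <= f1 -> n <= f2 -> Hfuel f1 n = Hfuel f2 n.
Proof.
elim: f1 f2 n => [|f1 IH] [|f2] n //=.
- by rewrite leqn0 => /eqP->.
- by move=> _; rewrite leqn0 => /eqP->.
move=> le_n_f1 le_n_f2; case: ifP => // n_gt1; congr _.+1; congr foldr.
rewrite prime_decompE; apply/eq_in_map => _ /mapP[p _ ->] /=.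
have lt_logn : logn p n < n by apply: ltn_logl; lia.
apply: IH; lia.
Qed.

Lemma H_rec n : 1 < n -> H n = (\max_(p <- primes n) H (logn p n)).+1.
Proof.
case: n => [//|n] n_gt1; rewrite /H /= ifN -?ltnNge //; congr _.+1.
rewrite prime_decompE -map_comp foldrE big_map; apply: eq_bigr => p _ /=.
by apply: Hfuel_eq; have := @ltn_logl p n.+1 isT; lia.
Qed.

Lemma H_le1 n : n <= 1 -> H n = 0.
Proof. by case: n => [|[|]]. Qed.

Lemma H_gt0 n : (0 < H n) = (1 < n).
Proof. by case: (leqP n 1) => [/H_le1->|/H_rec->]. Qed.

Lemma H_logn_lt p n : 1 < n -> H (logn p n) < H n.
Proof.
move=> n_gt1; rewrite [H n]H_rec // ltnS.
have [p_n|] := boolP (p \in primes n); first exact: leq_bigmax_seq.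
by rewrite -logn_gt0 -eqn0Ngt => /eqP->; rewrite H_le1.
Qed.

Lemma H_gt_witness {n j} : j.+1 < H n -> exists2 p, p \in primes n & j < H (logn p n).
Proof.
move=> lt_j_H; have n_gt1 : 1 < n by rewrite -H_gt0; apply: leq_trans lt_j_H.
apply/hasP; apply: contraTT lt_j_H => /hasPn small.
rewrite -leqNgt [H n]H_rec // ltnS; apply/bigmax_leqP_seq => p /small.
by rewrite -leqNgt.
Qed.

Lemma H_pfactor p e : prime p -> 0 < e -> H (p ^ e) = (H e).+1.
Proof.
move=> p_pr e_gt0; have p_gt1 := prime_gt1 p_pr.
rewrite H_rec; last by rewrite -{1}(expn0 p) ltn_exp2l.
by rewrite primesX // primes_prime // big_seq1 pfactorK.
Qed.

Lemma tetr2_gt0 k : 0 < tetr 2 k.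
Proof. by case: k => //= k; rewrite expn_gt0. Qed.

Lemma tetr2_gt1 {k} : 0 < k -> 1 < tetr 2 k.
Proof. by case: k => // k _ /=; rewrite -{1}(expn0 2) ltn_exp2l // tetr2_gt0. Qed.

Lemma H_tetr2 k : H (tetr 2 k) = k.
Proof. by elim: k => //= k IH; rewrite H_pfactor ?IH ?tetr2_gt0. Qed.

Lemma tetr2_leq_of_H {j n} : 0 < n -> j <= H n -> tetr 2 j <= n.
Proof.
elim: j n => // j IH n n_gt0 le_jH.
have n_gt1 : 1 < n by rewrite -H_gt0; apply: leq_trans le_jH.
case: j IH le_jH => [//|j] IH le_jH.
have [p p_n le_j_Hp] := H_gt_witness le_jH.
have p_pr : prime p by move: p_n; rewrite mem_primes => /andP[].
have /IH le_tetr_logn : 0 < logn p n by rewrite logn_gt0.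
change (2 ^ tetr 2 j.+1 <= n).
apply: (@leq_trans (2 ^ logn p n)); first by rewrite leq_exp2l // le_tetr_logn.
apply: leq_trans (dvdn_leq n_gt0 (pfactor_dvdnn p n)).
by rewrite leq_exp2r ?logn_gt0 //; apply: prime_gt1.
Qed.

Lemma H_logn_odd_lt k p n :
  0 < k -> prime p -> 2 < p -> n < 3 ^ tetr 2 k -> H (logn p n) < k.
Proof.
move=> k_gt0 p_pr p_gt2 n_lt; rewrite ltnNge; apply/negP => le_k_H.
have lognp_gt0 : 0 < logn p n.
  by rewrite lt0n; apply: contraTneq le_k_H => ->; rewrite -ltnNge.
have n_gt0 : 0 < n by move: lognp_gt0; rewrite logn_gt0 mem_primes => /and3P[].
have le_tetr_logn := tetr2_leq_of_H lognp_gt0 le_k_H.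
have : 3 ^ tetr 2 k <= n.
  apply: leq_trans (dvdn_leq n_gt0 (pfactor_dvdnn p n)).
  apply: (@leq_trans (3 ^ logn p n)); first by rewrite leq_exp2l.
  by rewrite leq_exp2r.
by rewrite leqNgt n_lt.
Qed.

Lemma H_logn2S {k n} :
  0 < k -> n < 3 ^ tetr 2 k -> k < H n -> H n = (H (logn 2 n)).+1.
Proof.
move=> k_gt0 n_lt lt_k_H.
have n_gt1 : 1 < n by rewrite -H_gt0; apply: leq_ltn_trans lt_k_H.
apply/eqP; rewrite eqn_leq H_logn_lt // andbT.
have le_max : \max_(p <- primes n) H (logn p n) <= maxn (H (logn 2 n)) k.-1.
  apply/bigmax_leqP_seq => p p_n _.
  have [-> | p_neq2] := eqVneq p 2; first exact: leq_maxl.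
  have p_pr : prime p by move: p_n; rewrite mem_primes => /andP[].
  have p_gt2 : 2 < p by rewrite ltn_neqAle eq_sym p_neq2 prime_gt1.
  apply: leq_trans (leq_maxr _ _); rewrite -ltnS prednK //.
  exact: H_logn_odd_lt.
move: lt_k_H; rewrite [H n]H_rec // !ltnS; lia.
Qed.

Lemma leq_double_exp2_exp3 {b} : 1 < b -> 2 * 2 ^ b <= 3 ^ b.
Proof.
elim: b => // b IH; rewrite ltnS leq_eqVlt => /orP[/eqP<- // | /IH le_b].
rewrite !expnS; lia.
Qed.

Lemma eq_tetr2_of_H {k e} :
  0 < k -> e < 2 * tetr 2 k.+1 -> k < H e -> e = tetr 2 k.+1.
Proof.
rewrite /= => k_gt0 e_lt lt_k_H.
have e_gt0 : 0 < e by apply: ltnW; rewrite -H_gt0; apply: leq_ltn_trans lt_k_H.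
have e_lt3 : e < 3 ^ tetr 2 k.
  exact: leq_trans e_lt (leq_double_exp2_exp3 (tetr2_gt1 k_gt0)).
have le_k_H2 : k <= H (logn 2 e) by rewrite -ltnS -(H_logn2S k_gt0 e_lt3 lt_k_H).
have logn2_gt0 : 0 < logn 2 e.
  by apply: ltnW; rewrite -H_gt0; apply: leq_trans le_k_H2.
have : 2 ^ tetr 2 k %| e by rewrite pfactor_dvdn // (tetr2_leq_of_H logn2_gt0 le_k_H2).
case/dvdnP=> q e_eq; suff q_eq1 : q = 1 by rewrite e_eq q_eq1 mul1n.
by move: e_lt e_gt0; rewrite e_eq ltn_pmul2r ?expn_gt0 // muln_gt0; lia.
Qed.

Lemma logn2_eq_iff n e :
  0 < n -> logn 2 n = e <-> exists a, n = 2 ^ e * a /\ odd a.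
Proof.
move=> n_gt0; split=> [<- | [a [-> odd_a]]].
  have [a coprime_2a n_eq] := pfactor_coprime (isT : prime 2) n_gt0.
  by exists a; rewrite {1}n_eq mulnC -coprime2n.
have a_gt0 : 0 < a by case: a odd_a.
by rewrite lognM ?expn_gt0 // pfactorK // logn_coprime ?coprime2n // addn0.
Qed.

Lemma logn2_lt_exp3 {a n} : 0 < n -> n < 3 ^ a -> logn 2 n < 2 * a.
Proof.
move=> n_gt0 n_lt; rewrite -(ltn_exp2l _ _ (ltnSn 1)).
apply: leq_ltn_trans (dvdn_leq n_gt0 (pfactor_dvdnn 2 n)) (leq_trans n_lt _).
rewrite expnM leq_exp2r // lt0n; apply: contraTneq n_lt => ->.
by rewrite -leqNgt expn0.
Qed.

Lemma H_gt_below_exp3 {k n} : 0 < k -> n < 3 ^ tetr 2 k.+1 ->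
  k.+1 < H n -> H n = k.+2 /\ logn 2 n = tetr 2 k.+1.
Proof.
move=> k_gt0 n_lt lt_H; have H_n := H_logn2S (ltn0Sn k) n_lt lt_H.
have n_gt0 : 0 < n by apply: ltnW; rewrite -H_gt0; apply: leq_ltn_trans lt_H.
have logn_eq : logn 2 n = tetr 2 k.+1.
  apply: eq_tetr2_of_H k_gt0 (logn2_lt_exp3 n_gt0 n_lt) _.
  by rewrite -ltnS -H_n.
by rewrite H_n logn_eq H_tetr2.
Qed.

Lemma H_leq_below_exp3 {k n} : 0 < k -> n < 3 ^ tetr 2 k.+1 -> H n <= k.+2.
Proof.
move=> k_gt0 n_lt; rewrite leqNgt; apply/negP => lt_H.
by have [H_eq _] := H_gt_below_exp3 k_gt0 n_lt (ltnW lt_H); rewrite H_eq ltnn in lt_H.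
Qed.

Lemma H_eq_below_exp3 {k n} : 0 < k -> n < 3 ^ tetr 2 k.+1 ->
  H n = k.+2 <-> logn 2 n = tetr 2 k.+1.
Proof.
move=> k_gt0 n_lt; split=> [H_eq | logn_eq].
  by case: (H_gt_below_exp3 k_gt0 n_lt); rewrite H_eq.
have n_gt1 : 1 < n.
  have : 2 \in primes n by rewrite -logn_gt0 logn_eq tetr2_gt0.
  by rewrite mem_primes => /and3P[_ n_gt0 /(dvdn_leq n_gt0)].
apply/eqP; rewrite eqn_leq (H_leq_below_exp3 k_gt0 n_lt) -(H_tetr2 k.+1) -logn_eq.
exact: H_logn_lt.
Qed.

Theorem lemma3 (m n : nat) :
  3 <= m -> 1 <= n -> n < 3 ^ tetr 2 m.-1 ->
  (H n = m <->
     exists a, n = 2 ^ tetr 2 m.-1 * a /\ odd a /\ 2 ^ tetr 2 m.-1 * a < 3 ^ tetr 2 m.-1)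
  /\
  ((~ exists a, n = 2 ^ tetr 2 m.-1 * a /\ odd a) -> H n <= m.-1).
Proof.
case: m => [|[|[|k]]] // _; rewrite [k.+3.-1]/= => n_gt0 n_lt.
have H_le := H_leq_below_exp3 (ltn0Sn k) n_lt.
have H_form : H n = k.+3 <-> exists a, n = 2 ^ tetr 2 k.+2 * a /\ odd a.
  exact: iff_trans (H_eq_below_exp3 (ltn0Sn k) n_lt) (logn2_eq_iff _ _ n_gt0).
split.
  split=> [/H_form [a [n_eq odd_a]] | [a [n_eq [odd_a _]]]]; last by apply/H_form; exists a.
  by exists a; rewrite -n_eq.
move=> not_form; suff : H n != k.+3 by move: H_le; lia.
by apply/eqP => /H_form.
Qed.
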